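(* Let $Q$ be a based quantale with base locale $Q_0$, and let $\varsigma$ be an equivariant support on $Q$. Then $\varsigma:Q\to Q_0$ is left adjoint to the sup-lattice homomorphism $Q_0\to Q$, $a\mapsto a\triangleright 1_Q$, and the adjunction is a reflection (i.e. $\varsigma(a\triangleright 1_Q)=a$ for all $a\in Q_0$). Hence the support $\varsigma$ is uniquely determined, and $a\mapsto a\triangleright1_Q$ also preserves arbitrary meets.
   Context: For a locale $A$, an $A$-$A$-bimodule is a sup-lattice $M$ with actions $a\triangleright m$, $m\triangleleft a$ preserving joins in each variable, with $1_A\triangleright m=m$, $(a\wedge b)\triangleright m=a\triangleright(b\triangleright m)$, $m\triangleleft1_A=m$, $m\triangleleft(a\wedge b)=(m\triangleleft a)\triangleleft b$, $(a\triangleright m)\triangleleft b=a\triangleright(m\triangleleft b)$. An $A$-$A$-quantale is such a $Q$ with associative join-preserving multiplication and $(a\triangleright x)y=a\triangleright(xy)$, $(x\triangleleft a)y=x(a\triangleright y)$, $(xy)\triangleleft a=x(y\triangleleft a)$; involutive if there is a join-preserving $x\mapsto x^*$ with $x^{**}=x$, $(xy)^*=y^*x^*$, $(a\triangleright(x\triangleleft b))^*=b\triangleright(x^*\triangleleft a)$. A based quantale is an involutive $Q_0$-$Q_0$-quantale for some locale $Q_0$; $1_Q$ is its top. A support is a join-preserving $\varsigma:Q\to Q_0$ with $\varsigma(1_Q)=1_{Q_0}$, $\varsigma(x)\triangleright y\le xx^*y$, $\varsigma(x)\triangleright x=x$ for all $x,y\in Q$; it is equivariant if $\varsigma(a\triangleright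 x)=a\wedge\varsigma(x)$ for all $a\in Q_0$, $x\in Q$. *)

Set Implicit Arguments.

Record SupLattice := {
  carrier :> Type;
  le : carrier -> carrier -> Prop;
  sup : (carrier -> Prop) -> carrier;
  le_refl : forall x, le x x;
  le_trans : forall x y z, le x y -> le y z -> le x z;
  le_antisym : forall x y, le x y -> le y x -> x = y;
  sup_ub : forall (S : carrier -> Prop) x, S x -> le x (sup S);
  sup_least : forall (S : carrier -> Prop) y, (forall x, S x -> le x y) -> le (sup S) y
}.
Arguments le {s} _ _.
Arguments sup {s} _.

Definition top (L : SupLattice) : L := sup (fun _ : L => True).
Definition inf {L : SupLattice} (S : L -> Prop) : L :=
  sup (fun x : L => forall y, S y -> le x y).

Definition image {X Y : Type} (f : X -> Y) (S : X -> Prop) : Y -> Prop :=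
  fun y => exists x, S x /\ y = f x.

Definition join_preserving {L M : SupLattice} (f : L -> M) : Prop :=
  forall S : L -> Prop, f (sup S) = sup (image f S).

Record Locale := {
  loc_sl :> SupLattice;
  meet : loc_sl -> loc_sl -> loc_sl;
  meet_lb1 : forall a b, le (meet a b) a;
  meet_lb2 : forall a b, le (meet a b) b;
  meet_glb : forall a b c, le c a -> le c b -> le c (meet a b);
  meet_distr : forall a (S : loc_sl -> Prop), meet a (sup S) = sup (image (meet a) S)
}.
Arguments meet {l} _ _.

Record Bimodule (A : Locale) := {
  bm_sl :> SupLattice;
  lact : A -> bm_sl -> bm_sl;
  ract : bm_sl -> A -> bm_sl;
  lact_jp1 : forall m : bm_sl, join_preserving (fun a : A => lact a m);
  lact_jp2 : forall a : A, join_preserving (lact a);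
  ract_jp1 : forall a : A, join_preserving (fun m : bm_sl => ract m a);
  ract_jp2 : forall m : bm_sl, join_preserving (ract m);
  lact_top : forall m, lact (top A) m = m;
  lact_meet : forall a b m, lact (meet a b) m = lact a (lact b m);
  ract_top : forall m, ract m (top A) = m;
  ract_meet : forall a b m, ract m (meet a b) = ract (ract m a) b;
  lact_ract : forall a b m, ract (lact a m) b = lact a (ract m b)
}.
Arguments lact {A b0} _ _.
Arguments ract {A b0} _ _.

Record BasedQuantale (A : Locale) := {
  bq_bm :> Bimodule A;
  mul : bq_bm -> bq_bm -> bq_bm;
  star : bq_bm -> bq_bm;
  mul_assoc : forall x y z, mul (mul x y) z = mul x (mul y z);
  mul_jp1 : forall y : bq_bm, join_preserving (fun x : bq_bm => mul x y);
  mul_jp2 : forall x : bq_bm, join_preserving (mul x);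
  mul_lact : forall (a : A) x y, mul (lact a x) y = lact a (mul x y);
  mul_ract_lact : forall (a : A) x y, mul (ract x a) y = mul x (lact a y);
  mul_ract : forall (a : A) x y, ract (mul x y) a = mul x (ract y a);
  star_jp : join_preserving star;
  star_invol : forall x, star (star x) = x;
  star_mul : forall x y, star (mul x y) = mul (star y) (star x);
  star_act : forall (a b : A) x, star (lact a (ract x b)) = lact b (ract (star x) a)
}.
Arguments mul {A b0} _ _.
Arguments star {A b0} _.

Definition support (A : Locale) (Q : BasedQuantale A) (s : Q -> A) : Prop :=
  join_preserving s /\
  s (top Q) = top A /\
  (forall x y : Q, le (lact (s x) y) (mul (mul x (star x)) y)) /\
  (forall x : Q, lact (s x) x = x).

Definition equivariant_support (A : Locale) (Q : BasedQuantale A) (s : Q -> A) : Prop :=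
  support Q s /\ (forall (a : A) (x : Q), s (lact a x) = meet a (s x)).


Set Implicit Arguments.

(* A support fixes each x under its own action, so x = s(x) |> x <= s(x) |> 1;
   equivariance gives s(a |> 1) = meet a (s 1) = a. With monotonicity these are the
   unit and counit of an adjunction s -| (- |> 1). Uniqueness of s and preservation
   of meets by (- |> 1) are then general facts about adjunctions between complete
   lattices. *)

Definition adjunction {L M : SupLattice} (f : L -> M) (g : M -> L) : Prop :=
  forall x a, le (f x) a <-> le x (g a).

Lemma le_top (L : SupLattice) (x : L) : le x (top L).
Proof. apply sup_ub. exact I. Qed.

Lemma inf_lb (L : SupLattice) (S : L -> Prop) (a : L) : S a -> le (inf S) a.
Proof. intros Ha. apply sup_least. intros x Hx. exact (Hx a Ha). Qed.

Lemma le_inf (L : SupLattice) (S : L -> Prop) (x : L) :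
  (forall y, S y -> le x y) -> le x (inf S).
Proof. intros Hx. apply sup_ub. exact Hx. Qed.

Lemma join_preserving_monotone (L M : SupLattice) (f : L -> M) (x y : L) :
  join_preserving f -> le x y -> le (f x) (f y).
Proof.
  intros Hf Hxy.
  set (P := fun z : L => z = x \/ z = y).
  assert (Hsup : sup P = y).
  { apply le_antisym.
    - apply sup_least. intros z [-> | ->]; [exact Hxy | apply le_refl].
    - apply sup_ub. right. reflexivity. }
  rewrite <- Hsup, (Hf P). apply sup_ub. exists x. split; [left |]; reflexivity.
Qed.

Section Adjunction.

Variables (L M : SupLattice) (f : L -> M) (g : M -> L).
Hypothesis Hfg : adjunction f g.

Lemma adjunction_monotone_right (a b : M) : le a b -> le (g a) (g b).
Proof.
  intros Hab. apply Hfg. apply le_trans with a; [| exact Hab].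
  apply Hfg. apply le_refl.
Qed.

Lemma adjunction_inf (S : M -> Prop) : g (inf S) = inf (image g S).
Proof.
  apply le_antisym.
  - apply le_inf. intros y [a [Ha ->]].
    apply adjunction_monotone_right, inf_lb. exact Ha.
  - apply Hfg, le_inf. intros a Ha.
    apply Hfg, inf_lb. exists a. split; [exact Ha | reflexivity].
Qed.

Lemma adjunction_left_unique (f' : L -> M) :
  adjunction f' g -> forall x, f' x = f x.
Proof.
  intros Hf'g x. apply le_antisym.
  - apply Hf'g, Hfg, le_refl.
  - apply Hfg, Hf'g, le_refl.
Qed.

End Adjunction.

Lemma meet_top (A : Locale) (a : A) : meet a (top A) = a.
Proof.
  apply le_antisym; [apply meet_lb1 |].
  apply meet_glb; [apply le_refl | apply le_top].
Qed.

Section EquivariantSupport.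

Variables (Q0 : Locale) (Q : BasedQuantale Q0) (s : Q -> Q0).
Hypothesis Hs : equivariant_support Q s.

Lemma equivariant_support_lact_top (a : Q0) : s (lact a (top Q)) = a.
Proof.
  destruct Hs as [[_ [Hs_top _]] Hs_equiv].
  rewrite Hs_equiv, Hs_top. apply meet_top.
Qed.

Lemma equivariant_support_adjunction :
  adjunction s (fun a : Q0 => lact a (top Q) : Q).
Proof.
  destruct Hs as [[Hs_jp [_ [_ Hs_fix]]] _].
  intros x a. split; intros Hle.
  - apply le_trans with (lact (s x) (top Q)).
    + assert (Hx : le (lact (s x) x) (lact (s x) (top Q))).
      { apply join_preserving_monotone; [apply lact_jp2 | apply le_top]. }
      rewrite Hs_fix in Hx. exact Hx.
    + apply (join_preserving_monotone (f := fun b : Q0 => lact b (top Q) : Q));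
        [apply lact_jp1 | exact Hle].
  - rewrite <- (equivariant_support_lact_top a).
    apply join_preserving_monotone; [exact Hs_jp | exact Hle].
Qed.

End EquivariantSupport.

Theorem lemma3p17 (Q0 : Locale) (Q : BasedQuantale Q0) (s : Q -> Q0) :
  equivariant_support Q s ->
  (* a |-> a |> 1_Q is a sup-lattice homomorphism Q0 -> Q *)
  join_preserving (fun a : Q0 => lact a (top Q) : Q) /\
  (* s is left adjoint to it *)
  (forall (x : Q) (a : Q0), le (s x) a <-> le x (lact a (top Q))) /\
  (* the adjunction is a reflection *)
  (forall a : Q0, s (lact a (top Q)) = a) /\
  (* hence s is uniquely determined *)
  (forall s' : Q -> Q0, equivariant_support Q s' -> forall x : Q, s' x = s x) /\
  (* and a |-> a |> 1_Q preserves arbitrary meets *)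
  (forall S : Q0 -> Prop,
      lact (inf (L:=Q0) S) (top Q) = inf (L:=Q) (image (fun a : Q0 => lact a (top Q) : Q) S)).
Proof.
  intros Hs.
  pose proof (equivariant_support_adjunction Hs) as Hadj.
  split; [apply lact_jp1 |].
  split; [exact Hadj |].
  split; [exact (equivariant_support_lact_top Hs) |].
  split.
  - intros s' Hs'.
    exact (adjunction_left_unique Hadj (equivariant_support_adjunction Hs')).
  - intros S. exact (adjunction_inf Hadj S).
Qed.
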